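(* Let $0<\Omega\le1/2$ and $\alpha\in[0,1]$. Let $\mathcal{S}^n_\Omega$ be the set of all subsets of $\{1,\dots,n\}$ of size $\lfloor\Omega n\rfloor$, and let $N_n(\Omega,\alpha)$ be the cardinality of the smallest $\mathcal{S}\subseteq\mathcal{S}^n_\Omega$ such that for every $\mathbf{s}\in\mathcal{S}^n_\Omega$ there is $\mathbf{s}'\in\mathcal{S}$ with $d(\mathbf{s},\mathbf{s}')\le\alpha$. Then $$\lim_{n\to\infty}\tfrac1n\log N_n(\Omega,\alpha)=R(\Omega,\alpha).$$
   Context: $d(\mathbf{s},\mathbf{s}')=1-|\mathbf{s}\cap\mathbf{s}'|/|\mathbf{s}|$. Logarithms are natural. $H(p)=-p\log p-(1-p)\log(1-p)$ is the binary entropy. $R(\Omega,\alpha)=H(\Omega)-\Omega H(\alpha)-(1-\Omega)H\big(\tfrac{\Omega\alpha}{1-\Omega}\big)$ if $\alpha<1-\Omega$, and $R(\Omega,\alpha)=0$ if $\alpha\ge1-\Omega$. *)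

From mathcomp Require Import all_boot.
From Stdlib Require Import Reals.

Set Implicit Arguments.
Unset Strict Implicit.
Unset Printing Implicit Defensive.

(* binary entropy, natural log; Stdlib's ln 0 = 0, so 0 * ln 0 = 0 as usual *)
Definition Hb (p : R) : R := (- p * ln p - (1 - p) * ln (1 - p))%R.

Definition Rate (Om al : R) : R :=
  if Rlt_dec al (1 - Om) then
    (Hb Om - Om * Hb al - (1 - Om) * Hb (Om * al / (1 - Om)))%R
  else 0%R.

Definition ksize (Om : R) (n : nat) : nat := Z.to_nat (Int_part (Om * INR n)).

Definition Sn (Om : R) (n : nat) : {set {set 'I_n}} :=
  [set s : {set 'I_n} | #|s| == ksize Om n].

Definition dist n (s s' : {set 'I_n}) : R :=
  (1 - INR #|s :&: s'| / INR #|s|)%R.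

Definition dle n (s s' : {set 'I_n}) (al : R) : bool :=
  if Rle_dec (dist s s') al then true else false.

Definition covers (Om al : R) n (F : {set {set 'I_n}}) : bool :=
  (F \subset Sn Om n) &&
  [forall s in Sn Om n, exists s' in F, dle s s' al].

(* N_n(Om, al): least cardinality of a covering family (minimum over all
   F : {set {set 'I_n}}, a finite type; the default #|[set: _]|.+1 is
   only reached if no cover exists) *)
Definition Ncov (Om al : R) (n : nat) : nat :=
  \big[minn/#|[set: {set 'I_n}]|.+1]_(F : {set {set 'I_n}} | covers Om al F) #|F|.

From Pilot Require Import Defs.
From mathcomp Require Import all_boot.
From Stdlib Require Import Reals Lra Lia ZArith.

(* Write k = floor(Om n) and j = floor(al k).  A k-set s' is within distance al of s iff
   |s \cap s'| >= k - j, so the ball around s is the union of the spheres of the k-sets meeting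
   s in exactly k - i points, i <= j, each of size C(k, i) C(n - k, i).  For i <= (1 - Om) k
   these sizes increase with i, so the ball has at most (j + 1) C(k, j) C(n - k, j) elements;
   covering S^n_Om therefore needs at least C(n, k) / ((j + 1) C(k, j) C(n - k, j)) balls, while
   the greedy covering (always take the centre that covers the most uncovered sets) uses at most
   C(n, k) / (C(k, j) C(n - k, j)) (ln C(n, k) + 2).  By the entropy estimates
   N H(m / N) - ln (N + 1) <= ln C(N, m) <= N H(m / N), both bounds are
   exp (n R(Om, al) + O(log n)).  For al >= 1 - Om the radius (1 - Om) k already gives a
   subexponential cover. *)

Set Implicit Arguments.
Unset Strict Implicit.
Unset Printing Implicit Defensive.

Local Open Scope R_scope.

Lemma factorial_fact (n : nat) : n`! = Factorial.fact n.
Proof. by elim: n => [//|n IH]; rewrite factS IH. Qed.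

Lemma INR_binomial (n m : nat) : (m <= n)%nat -> INR 'C(n, m) = C n m.
Proof.
move=> le_mn; rewrite /C.
have Efact : INR 'C(n, m) * (INR m`! * INR (n - m)%nat`!) = INR n`!.
  by rewrite -!mult_INR -(bin_fact le_mn).
rewrite !factorial_fact (_ : (n - m)%nat = (n - m)%coq_nat) // in Efact.
rewrite -Efact.
have := INR_fact_neq_0 m; have := INR_fact_neq_0 (n - m)%coq_nat.
by move=> ? ?; field.
Qed.

Lemma ln_le (x y : R) : 0 < x -> x <= y -> ln x <= ln y.
Proof.
move=> x_gt0 /Rle_lt_or_eq_dec [lt_xy|->]; last lra.
exact/Rlt_le/ln_increasing.
Qed.

Lemma ln_ge0 (x : R) : 1 <= x -> 0 <= ln x.
Proof. by move=> x_ge1; rewrite -ln_1; apply: ln_le; lra. Qed.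

Lemma ln_le_sub1 (x : R) : 0 < x -> ln x <= x - 1.
Proof. by move=> x_gt0; have := exp_ineq1_le (ln x); rewrite exp_ln //; lra. Qed.

Lemma sum_f_R0_ge_term (f : nat -> R) (N m : nat) :
  (forall i, 0 <= f i) -> (m <= N)%nat -> f m <= sum_f_R0 f N.
Proof.
move=> f_ge0; elim: N => [|N IH] le_mN.
  by move: le_mN; rewrite leqn0 => /eqP ->; apply: Rle_refl.
rewrite /=; have := f_ge0 N.+1; have := cond_pos_sum f N f_ge0.
case: (ltnP m N.+1) => [/IH|le_Nm]; first lra.
have -> : m = N.+1 by apply/eqP; rewrite eqn_leq le_mN.
lra.
Qed.

Lemma unimodal_le_mode (f : nat -> R) (N m : nat) :
  (forall j, (j < m)%nat -> f j <= f j.+1) ->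
  (forall j, (m <= j < N)%nat -> f j.+1 <= f j) ->
  forall j, (j <= N)%nat -> f j <= f m.
Proof.
move=> incr decr j le_jN.
have up d : (d <= m)%nat -> f (m - d)%nat <= f m.
  elim: d => [|d IH] le_dm; first by rewrite subn0; apply: Rle_refl.
  have lt_m : (m - d.+1 < m)%nat by rewrite ltn_subrL (leq_trans _ le_dm).
  have := incr _ lt_m; rewrite subnSK //.
  by have := IH (ltnW le_dm); lra.
have down d : (m + d <= N)%nat -> f (m + d)%nat <= f m.
  elim: d => [|d IH] le_mdN; first by rewrite addn0; apply: Rle_refl.
  rewrite addnS in le_mdN *; have := IH (ltnW le_mdN).
  by have := decr (m + d)%nat; rewrite leq_addr le_mdN => /(_ isT); lra.
case: (leqP j m) => [le_jm|lt_mj].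
  by rewrite -(subKn le_jm); apply/up/leq_subr.
by rewrite -(subnKC (ltnW lt_mj)); apply: down; rewrite subnKC // ltnW.
Qed.

Lemma Rdiv_le_of_le_mul (x d y : R) : 0 < d -> x <= d * y -> x / d <= y.
Proof.
move=> d_gt0 le_x; apply: (Rmult_le_reg_r d) => //.
by rewrite (_ : x / d * d = x); [lra | field; lra].
Qed.

Lemma Rle_div_of_mul_le (x d y : R) : 0 < d -> d * y <= x -> y <= x / d.
Proof.
move=> d_gt0 le_x; apply: (Rmult_le_reg_r d) => //.
by rewrite (_ : x / d * d = x); [lra | field; lra].
Qed.

Lemma exp_le (x y : R) : x <= y -> exp x <= exp y.
Proof. by case/Rle_lt_or_eq_dec=> [/exp_increasing/Rlt_le|->] //; apply: Rle_refl. Qed.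

Lemma exp_pow (x : R) (t : nat) : exp x ^ t = exp (INR t * x).
Proof.
elim: t => [|t IH]; first by rewrite /= Rmult_0_l exp_0.
by rewrite -tech_pow_Rmult IH -exp_plus S_INR; congr exp; ring.
Qed.

Lemma ln_le_2sqrt (x : R) : 0 < x -> ln x <= 2 * sqrt x.
Proof.
move=> x_gt0; have sqrt_gt0 : 0 < sqrt x by apply: sqrt_lt_R0.
rewrite -{1}(sqrt_sqrt x); last lra.
by rewrite ln_mult //; have := ln_le_sub1 sqrt_gt0; lra.
Qed.

Lemma Rabs_div_le (x d c : R) : 0 < d -> - c <= x <= c -> Rabs (x / d) <= c / d.
Proof.
move=> d_gt0 x_bounds; have : 0 < / d by apply: Rinv_0_lt_compat.
by rewrite /Rdiv => ?; apply: Rabs_le; split; nra.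
Qed.

(** * Binary entropy and binomial coefficients *)

Lemma Hb_0 : Hb 0 = 0.
Proof. by rewrite /Hb Rminus_0_r ln_1; ring. Qed.

Lemma Hb_1 : Hb 1 = 0.
Proof. by rewrite /Hb Rminus_diag ln_1; ring. Qed.

Lemma Hb_sym (x : R) : Hb (1 - x) = Hb x.
Proof. by rewrite /Hb (_ : 1 - (1 - x) = x); ring. Qed.

Lemma Hb_le1 (x : R) : 0 <= x <= 1 -> Hb x <= 1.
Proof.
move=> x01; have [->|x_neq0] := Req_dec x 0; first by rewrite Hb_0; lra.
have [->|x_neq1] := Req_dec x 1; first by rewrite Hb_1; lra.
have x_gt0 : 0 < x by lra.
have y_gt0 : 0 < 1 - x by lra.
have ln_inv z : 0 < z -> - ln z <= / z - 1.
  by move=> z_gt0; rewrite -ln_Rinv //; apply/ln_le_sub1/Rinv_0_lt_compat.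
have := ln_inv x x_gt0; have := ln_inv (1 - x) y_gt0 => l1 l2.
have : x * (/ x - 1) + (1 - x) * (/ (1 - x) - 1) = 1 by field; lra.
rewrite /Hb; nra.
Qed.

Lemma Hb_continuity_pt (x : R) : 0 < x < 1 -> continuity_pt Hb x.
Proof.
move=> x01.
have cont_id y : continuity_pt id y by apply/derivable_continuous_pt/derivable_pt_id.
have cont_ln y : 0 < y -> continuity_pt ln y.
  by move=> y_gt0; apply: derivable_continuous_pt; exists (/ y); apply: derivable_pt_lim_ln.
have cont_1m : continuity_pt (fun p => 1 - p) x.
  by apply: continuity_pt_minus (cont_id x); apply: continuity_pt_const.
apply: continuity_pt_minus; apply: continuity_pt_mult.
- exact: continuity_pt_opp (cont_id x).
- by apply: cont_ln; lra.
- exact: cont_1m.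
- by apply: continuity_pt_comp cont_1m _; apply: cont_ln; lra.
Qed.

Definition binom_term (N : nat) (x : R) (j : nat) : R :=
  INR 'C(N, j) * x ^ j * (1 - x) ^ (N - j).

Lemma binom_term_ge0 N x j : 0 <= x <= 1 -> 0 <= binom_term N x j.
Proof.
move=> x01; apply: Rmult_le_pos; [apply: Rmult_le_pos|];
  [exact: pos_INR | apply: pow_le; lra | apply: pow_le; lra].
Qed.

Lemma binom_term_sum N x : sum_f_R0 (binom_term N x) N = 1.
Proof.
have := binomial x (1 - x) N; rewrite (_ : x + (1 - x) = 1); last ring.
rewrite pow1 => ->; apply: sum_eq => j /leP le_jN.
by rewrite /binom_term INR_binomial.
Qed.

Lemma binom_term_ratio N x j : (j < N)%nat ->
  binom_term N x j.+1 * INR j.+1 * (1 - x) = binom_term N x j * (INR N - INR j) * x.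
Proof.
move=> lt_jN; rewrite /binom_term.
have Ebin : INR 'C(N, j.+1) * INR j.+1 = (INR N - INR j) * INR 'C(N, j).
  have := f_equal INR (mul_bin_left N j); rewrite !mult_INR minus_INR //.
    by rewrite Rmult_comm.
  exact/leP/ltnW.
have j1_neq0 : INR j.+1 <> 0 by apply: not_0_INR.
rewrite -(subnSK lt_jN) -!tech_pow_Rmult.
rewrite (_ : INR 'C(N, j.+1) = (INR N - INR j) * INR 'C(N, j) / INR j.+1); first by field.
by rewrite -Ebin; field.
Qed.

(* The terms binom_term N (m / N) j, j <= N, sum to 1 and peak at j = m, so the middle one lies
   in [1 / (N + 1), 1]; its logarithm is ln C(N, m) - N H(m / N). *)
Section BinomialMode.
Variables N m : nat.
Hypotheses (m_gt0 : (0 < m)%nat) (lt_mN : (m < N)%nat).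
Let x := INR m / INR N.

Lemma mode_ratio_bounds : 0 < x < 1 /\ INR N * x = INR m.
Proof.
have Hm : 0 < INR m by apply/lt_0_INR/ltP.
have HmN : INR m < INR N by apply/lt_INR/ltP.
rewrite /x; split; [split|].
- apply: Rdiv_lt_0_compat; lra.
- rewrite /Rdiv -(Rinv_r (INR N)); last lra.
  by apply: Rmult_lt_compat_r; [apply: Rinv_0_lt_compat; lra|].
- by field; lra.
Qed.

Lemma binom_term_le_mode : forall j, (j <= N)%nat -> binom_term N x j <= binom_term N x m.
Proof.
have [[x_gt0 x_lt1] Nx] := mode_ratio_bounds.
have x01 : 0 <= x <= 1 by lra.
have le_mN : INR m <= INR N by apply/le_INR/leP/ltnW.
apply: unimodal_le_mode => j.
- move=> lt_jm; have lt_jN := ltn_trans lt_jm lt_mN.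
  have := binom_term_ratio x lt_jN; have := binom_term_ge0 N j x01.
  have : INR j.+1 <= INR m by apply/le_INR/leP.
  rewrite S_INR => ? ? ?.
  have c_gt0 : 0 < (INR j + 1) * (1 - x) by have := pos_INR j; nra.
  apply: (Rmult_le_reg_r _ _ _ c_gt0); nra.
- case/andP => le_mj lt_jN.
  have := binom_term_ratio x lt_jN; have := binom_term_ge0 N j x01.
  have := binom_term_ge0 N j.+1 x01.
  have : INR m <= INR j by apply/le_INR/leP.
  rewrite S_INR => ? ? ? ?.
  have c_gt0 : 0 < (INR j + 1) * (1 - x) by have := pos_INR j; nra.
  apply: (Rmult_le_reg_r _ _ _ c_gt0); nra.
Qed.
End BinomialMode.

Lemma ln_binom_term_mode N m : (0 < m < N)%nat ->
  ln (binom_term N (INR m / INR N) m) = ln (INR 'C(N, m)) - INR N * Hb (INR m / INR N).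
Proof.
case/andP=> m_gt0 lt_mN; have [[x_gt0 x_lt1] Nx] := mode_ratio_bounds m_gt0 lt_mN.
set x := INR m / INR N in x_gt0 x_lt1 Nx *.
have C_gt0 : 0 < INR 'C(N, m) by apply/lt_0_INR/ltP; rewrite bin_gt0 ltnW.
have xm_gt0 : 0 < x ^ m by apply: pow_lt.
have ym_gt0 : 0 < (1 - x) ^ (N - m) by apply: pow_lt; lra.
rewrite /binom_term ln_mult //; last exact: Rmult_lt_0_compat.
rewrite ln_mult // !ln_pow; try lra.
by rewrite minus_INR; [rewrite /Hb -Nx; ring | apply/leP/ltnW].
Qed.

Lemma binom_term_mode_bounds N m : (0 < m < N)%nat ->
  1 <= (INR N + 1) * binom_term N (INR m / INR N) m <= INR N + 1.
Proof.
case/andP=> m_gt0 lt_mN; have [[x_gt0 x_lt1] _] := mode_ratio_bounds m_gt0 lt_mN.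
set x := INR m / INR N in x_gt0 x_lt1 *.
have x01 : 0 <= x <= 1 by lra.
have le1 : binom_term N x m <= 1.
  by rewrite -(binom_term_sum N x); apply/sum_f_R0_ge_term/ltnW => // j; apply: binom_term_ge0.
have ge1 : 1 <= (INR N + 1) * binom_term N x m.
  rewrite -{1}(binom_term_sum N x) Rmult_comm -S_INR -sum_cte.
  by apply: sum_Rle => j /leP; apply: binom_term_le_mode.
by have := pos_INR N; split; nra.
Qed.

Lemma ln_binomial_bounds N m : (m <= N)%nat ->
  INR N * Hb (INR m / INR N) - ln (INR N + 1) <= ln (INR 'C(N, m)) <=
  INR N * Hb (INR m / INR N).
Proof.
move=> le_mN; have lnN_ge0 : 0 <= ln (INR N + 1) by apply: ln_ge0; have := pos_INR N; lra.
have [->|m_gt0] := posnP m.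
  by rewrite bin0 /Rdiv Rmult_0_l Hb_0 ln_1; lra.
have [lt_mN|le_Nm] := ltnP m N; last first.
  have -> : m = N by apply/eqP; rewrite eqn_leq le_mN.
  have N_gt0 : 0 < INR N by apply/lt_0_INR/ltP/(leq_trans m_gt0).
  by rewrite binn /Rdiv Rinv_r ?Hb_1 ?ln_1; lra.
have mN : (0 < m < N)%nat by rewrite m_gt0.
have := ln_binom_term_mode mN; have := binom_term_mode_bounds mN.
set t := binom_term N _ m => t_bounds ln_t.
have t_gt0 : 0 < t by have := pos_INR N; nra.
have : ln 1 <= ln ((INR N + 1) * t) <= ln (INR N + 1).
  by split; apply: ln_le; lra.
by rewrite ln_1 ln_mult; [lra | have := pos_INR N; lra | done].
Qed.

Local Close Scope R_scope.

(** * Counting sets at a given distance *)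

Section Spheres.
Variable T : finType.

Lemma setIU_split (s0 A C : {set T}) : A \subset s0 -> C \subset ~: s0 ->
  s0 :&: (A :|: C) = A /\ (A :|: C) :\: s0 = C.
Proof.
move=> sAs0; rewrite -disjoints_subset => dis_Cs0.
split.
  rewrite setIUr (setIidPr sAs0).
  by move: dis_Cs0; rewrite disjoint_sym -setI_eq0 => /eqP ->; rewrite setU0.
rewrite setDUl (setDidPl dis_Cs0).
by move: sAs0; rewrite -setD_eq0 => /eqP ->; rewrite set0U.
Qed.

Definition sphere (s0 : {set T}) (j : nat) : {set {set T}} :=
  [set s : {set T} | (#|s| == #|s0|) && (#|s0 :&: s| == #|s0| - j)].

Lemma card_sphere (s0 : {set T}) (j : nat) : j <= #|s0| ->
  #|sphere s0 j| = 'C(#|s0|, j) * 'C(#|T| - #|s0|, j).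
Proof.
move=> le_js0.
pose inside := [set A : {set T} | A \subset s0 & #|A| == #|s0| - j].
pose outside := [set C : {set T} | C \subset ~: s0 & #|C| == j].
pose glue := fun p : {set T} * {set T} => p.1 :|: p.2.
have glue_inj : {in setX inside outside &, injective glue}.
  move=> [A C] [A' C']; rewrite !inE /= => /andP[/andP[sA _] /andP[sC _]].
  move=> /andP[/andP[sA' _] /andP[sC' _]] /= eq_glue.
  have [eA eC] := setIU_split sA sC; have [eA' eC'] := setIU_split sA' sC'.
  rewrite /glue /= in eq_glue.
  have -> : A = A' by rewrite -eA -eA' eq_glue.
  by have -> : C = C' by rewrite -eC -eC' eq_glue.
have -> : sphere s0 j = glue @: setX inside outside.
  apply/setP=> s; apply/idP/imsetP.
  - rewrite inE => /andP[/eqP s_k /eqP s0s].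
    exists (s0 :&: s, s :\: s0); last by rewrite /glue /= setIC setID.
    rewrite !inE subsetIl s0s eqxx /=; apply/andP; split.
      by apply/subsetP=> x; rewrite !inE => /andP[].
    have := cardsID s0 s; rewrite setIC s0s s_k => E.
    by rewrite -(addKn (#|s0| - j) #|s :\: s0|) E subKn.
  - case=> [[A C]]; rewrite !inE /= => /andP[/andP[sA /eqP cA] /andP[sC /eqP cC]] ->.
    have [eA _] := setIU_split sA sC; rewrite /glue /= eA cA eqxx andbT.
    have -> : #|A :|: C| = #|A| + #|C|.
      apply/eqP; rewrite (leq_card_setU A C).2; apply: disjointWl sA _.
      by rewrite disjoint_sym disjoints_subset.
    by rewrite cA cC subnK.
rewrite card_in_imset // cardsX !cards_draws.
by rewrite -(cardsC s0) addKn bin_sub.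
Qed.
End Spheres.

(** * The greedy covering *)

Lemma leq_card_bigcup (I : Type) (r : seq I) (p : pred I) (T : finType)
  (A : I -> {set T}) : #|\bigcup_(i <- r | p i) A i| <= \sum_(i <- r | p i) #|A i|.
Proof.
elim/big_ind2: _ => [|A1 A2 n1 n2 le1 le2|//]; first by rewrite cards0.
by apply: leq_trans (leq_add le1 le2); rewrite leq_card_setU.
Qed.

Lemma card_set_sep_sum (T : finType) (U : {set T}) (p : pred T) :
  #|[set s in U | p s]| = \sum_(s in U) p s.
Proof.
rewrite -sum1_card (eq_bigl (fun s => (s \in U) && p s)) => [|s]; last by rewrite inE.
by rewrite big_mkcondr /=; apply: eq_bigr => s _; case: (p s).
Qed.

Lemma greedy_count_step (t f f' u u' : nat) (q : R) : (0 <= q)%R -> f <= f'.+1 ->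
  (INR u' <= INR u * q)%R -> (INR f' <= INR t + INR u' * q ^ t)%R ->
  (INR f <= INR t.+1 + INR u * q ^ t.+1)%R.
Proof.
move=> q_ge0 /leP/le_INR; rewrite !S_INR /= => le_f le_u le_f'.
have qt_ge0 : (0 <= q ^ t)%R by apply: pow_le.
have : (INR u' * q ^ t <= INR u * q * q ^ t)%R by apply: Rmult_le_compat_r.
lra.
Qed.

Section GreedyCover.
Variables (V : finType) (X : {set V}) (P : V -> V -> bool) (b : nat).
Hypothesis P_refl : forall s, s \in X -> P s s.
Hypothesis card_ball_ge : forall s, s \in X -> b <= #|[set s' in X | P s s']|.

Let q := (1 - INR b / INR #|X|)%R.

(* Double counting: the balls around the points of U cover U at least b times in total. *)
Lemma greedy_choice (U : {set V}) s0 : U \subset X -> s0 \in U ->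
  exists2 s', s' \in X & #|U| * b <= #|X| * #|[set s in U | P s s']|.
Proof.
move=> sUX Us0; pose g s' := #|[set s in U | P s s']|.
have [s' Xs' g_max] := arg_maxnP g (subsetP sUX s0 Us0).
exists s' => //.
have double_count : \sum_(s' in X) g s' = \sum_(s in U) #|[set s' in X | P s s']|.
  rewrite /g; under eq_bigr => y _ do rewrite card_set_sep_sum.
  by rewrite exchange_big; apply: eq_bigr => s _; rewrite card_set_sep_sum.
apply: (@leq_trans (\sum_(s in U) #|[set s' in X | P s s']|)).
  rewrite -sum_nat_const; apply: leq_sum => s Us.
  exact/card_ball_ge/(subsetP sUX).
by rewrite -double_count -sum_nat_const; apply: leq_sum.
Qed.

Lemma shrink_uncovered (U : {set V}) s0 : U \subset X -> s0 \in U ->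
  exists2 s', s' \in X & (INR #|U :\: [set s in U | P s s']| <= INR #|U| * q)%R.
Proof.
move=> sUX Us0; have [s' Xs' count] := greedy_choice sUX Us0.
exists s' => //; set B := [set s in U | P s s'].
have X_gt0 : (0 < INR #|X|)%R.
  by apply/lt_0_INR/ltP/card_gt0P; exists s0; apply: (subsetP sUX).
have sBU : B \subset U by apply/subsetP=> s; rewrite inE => /andP[].
rewrite cardsD (setIidPr sBU) minus_INR; last exact/leP/subset_leq_card.
have : (INR #|U| * INR b <= INR #|X| * INR #|B|)%R by rewrite -!mult_INR; apply/le_INR/leP.
have -> : (INR #|U| * q = INR #|U| - INR #|U| * INR b / INR #|X|)%R by rewrite /q; field; lra.
move=> le_UB; suff : (INR #|U| * INR b / INR #|X| <= INR #|B|)%R by lra.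
apply: (Rmult_le_reg_l (INR #|X|)) => //.
by rewrite (_ : INR #|X| * (INR #|U| * INR b / INR #|X|) = INR #|U| * INR b)%R; [|field]; lra.
Qed.

Lemma q_ge0 s0 : s0 \in X -> (0 <= q)%R.
Proof.
move=> Xs0; have X_gt0 : (0 < INR #|X|)%R by apply/lt_0_INR/ltP/card_gt0P; exists s0.
have : (INR b <= INR #|X|)%R.
  apply/le_INR/leP/(leq_trans (card_ball_ge Xs0))/subset_leq_card.
  by apply/subsetP=> s; rewrite inE => /andP[].
move=> le_bX; rewrite /q; suff : (INR b / INR #|X| <= 1)%R by lra.
apply: (Rmult_le_reg_l (INR #|X|)) => //.
by rewrite (_ : INR #|X| * (INR b / INR #|X|) = INR b)%R; [|field]; lra.
Qed.

(* After t greedy steps at most |U| q^t points of U remain; cover them by themselves. *)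
Lemma greedy_cover t (U : {set V}) : U \subset X ->
  exists F : {set V}, [/\ F \subset X, {in U, forall s, exists2 s', s' \in F & P s s'} &
    (INR #|F| <= INR t + INR #|U| * q ^ t)%R].
Proof.
elim: t U => [|t IH] U sUX.
  exists U; split => //; last by rewrite /=; lra.
  by move=> s Us; exists s => //; apply/P_refl/(subsetP sUX).
have [->|[s0 Us0]] := set_0Vmem U.
  exists set0; split; [exact: sub0set | by move=> s; rewrite inE |].
  by rewrite cards0 Rmult_0_l Rplus_0_r; apply: pos_INR.
have [s' Xs' shrink] := shrink_uncovered sUX Us0.
set U' := U :\: _ in shrink.
have [F' [sF'X covF' cardF']] := IH U' (subset_trans (subsetDl U _) sUX).
exists (s' |: F'); split.
- by rewrite subUset sub1set Xs' sF'X.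
- move=> s Us; have [Pss'|nPss'] := boolP (P s s').
    by exists s' => //; rewrite setU11.
  have [|s'' F's'' Pss''] := covF' s; first by rewrite !inE Us nPss'.
  by exists s'' => //; rewrite setU1r.
- apply: (greedy_count_step (q_ge0 (subsetP sUX s0 Us0)) _ shrink cardF').
  by rewrite cardsU1; case: (s' \notin F').
Qed.
End GreedyCover.

(** * Bounds on the covering number *)

Lemma sum_le_last (f : nat -> nat) (j : nat) : (forall i, i < j -> f i <= f i.+1) ->
  \sum_(i < j.+1) f i <= j.+1 * f j.
Proof.
move=> f_incr; rewrite -[X in X * _]card_ord -sum_nat_const.
apply: leq_sum => i _; rewrite -(subKn (ltnSE (ltn_ord i))).
elim: (j - i) (leq_subr i j) => [|d IH] le_dj; first by rewrite subn0.
apply: leq_trans (IH (ltnW le_dj)).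
by rewrite -(subnSK le_dj) f_incr // ltn_subrL (leq_trans _ le_dj).
Qed.

Lemma binomial_prod_incr (k m i : nat) : i.+1 * i.+1 <= (k - i) * (m - i) ->
  'C(k, i) * 'C(m, i) <= 'C(k, i.+1) * 'C(m, i.+1).
Proof.
move=> le_i; rewrite -(@leq_pmul2l (i.+1 * i.+1)) // [X in _ <= X]mulnACA !mul_bin_left.
by rewrite [X in _ <= X]mulnACA leq_mul2r le_i orbT.
Qed.

Lemma bigmin_le (I : eqType) (r : seq I) (P : pred I) (f : I -> nat) d x :
  x \in r -> P x -> \big[minn/d]_(i <- r | P i) f i <= f x.
Proof.
elim: r => //= y r IH; rewrite inE big_cons => /orP[/eqP <-|r_x] Px.
  by rewrite Px geq_minl.
by case: (P y); [apply: leq_trans (geq_minr _ _) (IH r_x Px) | exact: IH].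
Qed.

Section CoveringNumber.
Variables (Om al : R) (n : nat).
Let k := ksize Om n.

Lemma card_Sn : #|Sn Om n| = 'C(n, k).
Proof. by rewrite card_draws card_ord. Qed.

Lemma Ncov_le (F : {set {set 'I_n}}) : covers Om al F -> Ncov Om al n <= #|F|.
Proof. by move=> covF; apply: bigmin_le. Qed.

Lemma Ncov_ind (Q : nat -> Prop) : Q #|[set: {set 'I_n}]|.+1 ->
  (forall F : {set {set 'I_n}}, covers Om al F -> Q #|F|) -> Q (Ncov Om al n).
Proof. by move=> Q0 QF; apply: big_ind => // x y; rewrite /minn; case: (x < y). Qed.

Lemma Sn_nonempty : k <= n -> exists s0, s0 \in Sn Om n.
Proof. by move=> le_kn; apply/card_gt0P; rewrite card_Sn bin_gt0. Qed.

Lemma Ncov_gt0 : k <= n -> 0 < Ncov Om al n.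
Proof.
move=> /Sn_nonempty[s0 Sn_s0]; apply: (Ncov_ind (Q := fun m => 0 < m)) => //.
move=> F /andP[_ /forall_inP covF].
by have /exists_inP[s' Fs' _] := covF s0 Sn_s0; apply/card_gt0P; exists s'.
Qed.

Lemma card_sphere_Sn (s0 : {set 'I_n}) j : s0 \in Sn Om n -> j <= k ->
  #|sphere s0 j| = 'C(k, j) * 'C(n - k, j).
Proof. by rewrite inE => /eqP s0_k le_jk; rewrite card_sphere s0_k ?card_ord. Qed.

Variable j : nat.
Hypothesis le_jk : j <= k.

Lemma sphere_le_binomial : k <= n -> 'C(k, j) * 'C(n - k, j) <= 'C(n, k).
Proof.
move=> /Sn_nonempty[s0 Sn_s0]; rewrite -(card_sphere_Sn Sn_s0 le_jk) -card_Sn.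
apply/subset_leq_card/subsetP=> s; move: Sn_s0; rewrite !inE => /eqP s0_k.
by rewrite s0_k => /andP[].
Qed.

Lemma binomial_le_Ncov_ball :
  (forall s s' : {set 'I_n}, #|s| = k -> #|s'| = k -> dle s s' al -> k - #|s :&: s'| <= j) ->
  'C(n, k) <= Ncov Om al n * \sum_(i < j.+1) 'C(k, i) * 'C(n - k, i).
Proof.
move=> close_near; set ball := \sum_(i < j.+1) _.
have ball_gt0 : 0 < ball by rewrite /ball big_ord_recl !bin0 ltn_addr.
apply: (Ncov_ind (Q := fun N => 'C(n, k) <= N * ball)).
  rewrite -card_Sn (leq_trans _ (leq_pmulr _ ball_gt0)) //.
  exact/leqW/subset_leq_card/subsetT.
move=> F /andP[sFS /forall_inP covF].
have cover : Sn Om n \subset \bigcup_(s' in F) \bigcup_(i < j.+1) sphere s' i.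
  apply/subsetP=> s Sn_s; have /exists_inP[s' Fs' close] := covF s Sn_s.
  move: Sn_s (subsetP sFS s' Fs'); rewrite !inE => /eqP s_k /eqP s'_k.
  apply/bigcupP; exists s' => //; apply/bigcupP.
  have lt_j : k - #|s :&: s'| < j.+1 by rewrite ltnS close_near.
  exists (Ordinal lt_j) => //; rewrite inE s_k s'_k eqxx setIC subKn ?eqxx //.
  by apply: leq_trans (subset_leq_card (subsetIl s s')) _; rewrite s_k.
rewrite -card_Sn; apply: leq_trans (subset_leq_card cover) _.
apply: leq_trans (leq_card_bigcup _ _ _) _.
rewrite -sum_nat_const; apply: leq_sum => s' Fs'.
apply: leq_trans (leq_card_bigcup _ _ _) _; apply: leq_sum => i _.
by rewrite card_sphere_Sn ?(subsetP sFS) // (leq_trans _ le_jk) // -ltnS.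
Qed.

Lemma Ncov_le_greedy :
  (forall s s' : {set 'I_n}, #|s| = k -> #|s'| = k -> k - #|s :&: s'| <= j -> dle s s' al) ->
  forall t, (INR (Ncov Om al n) <= INR t + INR 'C(n, k) *
    (1 - INR ('C(k, j) * 'C(n - k, j)) / INR 'C(n, k)) ^ t)%R.
Proof.
move=> near_close t.
have dle_refl s : s \in Sn Om n -> dle s s al.
  by rewrite inE => /eqP s_k; apply: near_close; rewrite // setIid s_k subnn.
have card_ball s : s \in Sn Om n ->
    'C(k, j) * 'C(n - k, j) <= #|[set s' in Sn Om n | dle s s' al]|.
  move=> Sn_s; rewrite -(card_sphere_Sn Sn_s le_jk); apply/subset_leq_card/subsetP=> s'.
  move: Sn_s; rewrite !inE => /eqP s_k; rewrite s_k => /andP[s'_k /eqP ss'].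
  by rewrite s'_k near_close ?(eqP s'_k) // ss' subKn.
have [F [sFS covF cardF]] := greedy_cover dle_refl card_ball t (subxx _).
rewrite -card_Sn; apply: Rle_trans cardF; apply/le_INR/leP/Ncov_le.
rewrite /covers sFS; apply/forall_inP=> s Sn_s; apply/exists_inP.
by have [s' Fs' close] := covF s Sn_s; exists s'.
Qed.

Lemma ball_le_sphere :
  (forall i, i < j -> i.+1 * i.+1 <= (k - i) * (n - k - i)) ->
  \sum_(i < j.+1) 'C(k, i) * 'C(n - k, i) <= j.+1 * ('C(k, j) * 'C(n - k, j)).
Proof.
move=> le_i; apply: (sum_le_last (f := fun i => 'C(k, i) * 'C(n - k, i))) => i.
by move/le_i/binomial_prod_incr.
Qed.
End CoveringNumber.

Local Open Scope R_scope.

Lemma floor_spec (r : R) : 0 <= r ->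
  INR (Z.to_nat (Int_part r)) <= r < INR (Z.to_nat (Int_part r)) + 1.
Proof.
move=> r_ge0; have [lb ub] := base_Int_part r.
have : (-1 < Int_part r)%Z by apply: lt_IZR; lra.
by move=> ?; rewrite INR_IZR_INZ Z2Nat.id; [lra | lia].
Qed.

Lemma floor_max (r : R) (m : nat) : 0 <= r -> INR m <= r -> (m <= Z.to_nat (Int_part r))%nat.
Proof.
move=> r_ge0 le_mr; have [_ ub] := floor_spec r_ge0.
have : INR m < INR (Z.to_nat (Int_part r)).+1 by rewrite S_INR; lra.
by move/INR_lt/ltP.
Qed.

Lemma nat_up_gt (r : R) (n : nat) : 0 <= r -> (Z.to_nat (up r) <= n)%nat -> r < INR n.
Proof.
move=> r_ge0 /leP/le_INR; have [up_gt _] := archimed r.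
by rewrite INR_IZR_INZ Z2Nat.id; [lra | apply: le_IZR; lra].
Qed.

Lemma Un_cv_squeeze (u lo hi : nat -> R) (L : R) (N0 : nat) :
  (forall n, (N0 <= n)%nat -> lo n <= u n <= hi n) -> Un_cv lo L -> Un_cv hi L -> Un_cv u L.
Proof.
move=> between cv_lo cv_hi eps eps_gt0.
have [N1 near_lo] := cv_lo eps eps_gt0; have [N2 near_hi] := cv_hi eps eps_gt0.
exists (maxn N0 (maxn N1 N2)) => n /leP; rewrite !geq_max => /and3P[n0 n1 n2].
have := between n n0; have := near_lo n (elimT leP n1); have := near_hi n (elimT leP n2).
rewrite /Rdist => /Rabs_def2 ? /Rabs_def2 ? ?; apply: Rabs_def1; lra.
Qed.

Lemma Un_cv_eventually_ext (u v : nat -> R) (L : R) (N0 : nat) :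
  (forall n, (N0 <= n)%nat -> u n = v n) -> Un_cv u L -> Un_cv v L.
Proof. by move=> eq_uv cv_u; apply: (Un_cv_squeeze (N0 := N0) _ cv_u cv_u) => n /eq_uv ->; lra. Qed.

Lemma Un_cv_const (c : R) : Un_cv (fun _ => c) c.
Proof. by move=> eps eps_gt0; exists 0%nat => n _; rewrite /Rdist Rminus_diag Rabs_R0. Qed.

Lemma Un_cv_of_le_div (u : nat -> R) (L c : R) (N0 : nat) : 0 <= c ->
  (forall n, (N0 <= n)%nat -> Rabs (u n - L) <= c / INR n) -> Un_cv u L.
Proof.
move=> c_ge0 near_L eps eps_gt0.
have ce_ge0 : 0 <= c / eps by apply: Rmult_le_pos; [| apply/Rlt_le/Rinv_0_lt_compat].
exists (maxn N0 (maxn 1 (Z.to_nat (up (c / eps))))) => n /leP.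
rewrite !geq_max => /and3P[n0 n1 /(nat_up_gt ce_ge0) lt_n].
have n_gt0 : 0 < INR n by apply/lt_0_INR/ltP.
rewrite /Rdist; apply: Rle_lt_trans (near_L n n0) _.
apply: (Rmult_lt_reg_r (INR n)) => //; rewrite (_ : c / INR n * INR n = c); last by field; lra.
have := Rmult_lt_compat_r eps _ _ eps_gt0 lt_n.
by rewrite (_ : c / eps * eps = c); [lra | field; lra].
Qed.

(* ln (n + 2) / n <= 2 sqrt (n + 2) / n, whose square is at most 12 / n. *)
Lemma Un_cv_ln_div : Un_cv (fun n => ln (INR n + 2) / INR n) 0.
Proof.
move=> eps eps_gt0; have eps2_gt0 : 0 < eps * eps by nra.
have c_ge0 : 0 <= 12 / (eps * eps) by apply/Rlt_le/Rdiv_lt_0_compat; lra.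
exists (maxn 1 (Z.to_nat (up (12 / (eps * eps))))) => n /leP.
rewrite geq_max => /andP[/leP/le_INR n_ge1 /(nat_up_gt c_ge0) lt_n].
have big_n : 12 < eps * eps * INR n.
  have := Rmult_lt_compat_r (eps * eps) _ _ eps2_gt0 lt_n.
  by rewrite (_ : 12 / (eps * eps) * (eps * eps) = 12); [lra | field; lra].
rewrite INR_1 in n_ge1.
have ln_ge0 : 0 <= ln (INR n + 2) by apply: ln_ge0; lra.
have ln_le2 : ln (INR n + 2) <= 2 * sqrt (INR n + 2) by apply: ln_le_2sqrt; lra.
have sq := sqrt_sqrt (INR n + 2) ltac:(lra).
set z := sqrt (INR n + 2) in ln_le2 sq.
rewrite /Rdist Rminus_0_r Rabs_pos_eq; last first.
  by apply: Rmult_le_pos ln_ge0 _; apply/Rlt_le/Rinv_0_lt_compat; lra.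
apply: (Rle_lt_trans _ (2 * z / INR n)).
  by apply: Rmult_le_compat_r => //; apply/Rlt_le/Rinv_0_lt_compat; lra.
apply: (Rmult_lt_reg_r (INR n)); first lra.
rewrite (_ : 2 * z / INR n * INR n = 2 * z); last by field; lra.
have : 0 <= z by apply: sqrt_pos.
have : (2 * z) * (2 * z) < (eps * INR n) * (eps * INR n).
  by rewrite (_ : 2 * z * (2 * z) = 4 * (z * z)); [rewrite sq; nra | ring].
have : 0 < eps * INR n by apply: Rmult_lt_0_compat; lra.
nra.
Qed.

(* Take t = ceil ((C / b) ln C) in a bound of the greedy kind and use 1 - p <= exp (- p). *)
Lemma greedy_log_bound (M C b : R) : 0 < b <= C -> 1 <= C ->
  (forall t : nat, M <= INR t + C * (1 - b / C) ^ t) -> M <= C / b * (ln C + 2).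
Proof.
move=> b_bounds C_ge1 greedy; set p := b / C; set r := C / b * ln C.
have lnC_ge0 : 0 <= ln C by apply: ln_ge0.
have Cb_ge1 : 1 <= C / b by apply: Rle_div_of_mul_le; lra.
have r_ge0 : 0 <= r by apply: Rmult_le_pos; lra.
have p_bounds : 0 < p <= 1 by split; [apply: Rdiv_lt_0_compat | apply: Rdiv_le_of_le_mul]; lra.
have [up_gt up_le] := archimed r.
set t := Z.to_nat (up r).
have Et : INR t = IZR (up r) by rewrite INR_IZR_INZ Z2Nat.id //; apply: le_IZR; lra.
have lnC_le : ln C <= INR t * p.
  rewrite (_ : ln C = r * p); last by rewrite /r /p; field; lra.
  by apply: Rmult_le_compat_r; lra.
have tail_le1 : C * (1 - p) ^ t <= 1.
  have : (1 - p) ^ t <= / C.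
    apply: Rle_trans (_ : exp (- p) ^ t <= _).
      by apply: pow_incr; have := exp_ineq1_le (- p); lra.
    rewrite exp_pow -(exp_ln C); last lra.
    by rewrite -exp_Ropp; apply: exp_le; nra.
  move=> le_inv; have := Rmult_le_compat_l C _ _ ltac:(lra) le_inv.
  by rewrite Rinv_r; lra.
by have := greedy t; rewrite -/p Rmult_plus_distr_l -/r; lra.
Qed.

(** * Asymptotics of the covering number *)

Section Asymptotics.
Variables Om al : R.
Hypotheses (Om_bounds : 0 < Om <= 1 / 2) (al_bounds : 0 <= al <= 1).

Definition radius := Rmin al (1 - Om).

Definition jsize (n : nat) : nat := Z.to_nat (Int_part (radius * INR (ksize Om n))).

Definition rate_seq (n : nat) : R :=
  Hb (INR (ksize Om n) / INR n)
  - INR (ksize Om n) / INR n * Hb (INR (jsize n) / INR (ksize Om n))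
  - (INR n - INR (ksize Om n)) / INR n * Hb (INR (jsize n) / (INR n - INR (ksize Om n))).

Lemma radius_bounds : 0 <= radius <= 1 - Om /\ radius <= al.
Proof.
rewrite /radius; have := Rmin_l al (1 - Om); have := Rmin_r al (1 - Om).
by have := Rmin_glb al (1 - Om) 0; lra.
Qed.

Lemma ksize_spec n : INR (ksize Om n) <= Om * INR n < INR (ksize Om n) + 1.
Proof. by apply: floor_spec; have := pos_INR n; nra. Qed.

Lemma jsize_spec n : INR (jsize n) <= radius * INR (ksize Om n) < INR (jsize n) + 1.
Proof. by apply: floor_spec; have := pos_INR (ksize Om n); have := radius_bounds; nra. Qed.

Section LargeN.
Variable n : nat.
Hypothesis n_large : 2 <= Om * INR n.
Local Notation k := (ksize Om n).
Local Notation j := (jsize n).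
Local Notation N := (INR n).
Local Notation K := (INR k).
Local Notation J := (INR j).

Lemma K_ge1 : 1 <= K.
Proof. by have := ksize_spec n; lra. Qed.

Lemma K_le : K <= Om * N.
Proof. by have := ksize_spec n; lra. Qed.

Lemma J_le : J <= (1 - Om) * K.
Proof. by have := jsize_spec n; have := radius_bounds; have := K_ge1; nra. Qed.

Lemma compl_ge : (1 - Om) * K <= N - K.
Proof. by have := K_le; have := K_ge1; nra. Qed.

Lemma ksize_le : (k <= n)%nat.
Proof. by apply/leP/INR_le; have := compl_ge; have := K_ge1; nra. Qed.

Lemma jsize_le : (j <= k)%nat.
Proof. by apply/leP/INR_le; have := J_le; have := K_ge1; nra. Qed.

Lemma INR_compl : INR (n - k) = N - K.
Proof. by rewrite minus_INR //; apply/leP/ksize_le. Qed.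

Lemma jsize_le_compl : (j <= n - k)%nat.
Proof.
by apply/leP/INR_le; rewrite INR_compl; have := J_le; have := compl_ge; lra.
Qed.

(* (i + 1)^2 <= (k - i - 1)(n - k - i - 1) already holds, because (i + 1) n <= k (n - k). *)
Lemma sphere_growth i : (i < j)%nat -> (i.+1 * i.+1 <= (k - i) * (n - k - i))%nat.
Proof.
move=> lt_ij; have le_ik := leq_trans (ltnW lt_ij) jsize_le.
have le_ink := leq_trans (ltnW lt_ij) jsize_le_compl.
apply/leP/INR_le.
rewrite !mult_INR (minus_INR _ _ (leP le_ik)) (minus_INR _ _ (leP le_ink)) INR_compl.
have : INR i + 1 <= J by rewrite -S_INR; apply/le_INR/leP.
have := J_le; have := compl_ge; have := K_ge1; rewrite S_INR.
set I := INR i => K1 cK JK IJ.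
have IN : (I + 1) * N <= K * (N - K).
  have : (I + 1) * N <= (1 - Om) * K * N by apply: Rmult_le_compat_r; [apply: pos_INR | lra].
  by have := K_le; nra.
nra.
Qed.

Lemma card_setI_le (s s' : {set 'I_n}) : #|s| = k -> (#|s :&: s'| <= k)%nat.
Proof. by move=> <-; apply/subset_leq_card/subsetIl. Qed.

Lemma dist_eq (s s' : {set 'I_n}) : #|s| = k ->
  K * Defs.dist s s' = INR (k - #|s :&: s'|).
Proof.
move=> s_k; rewrite minus_INR; last exact/leP/card_setI_le.
by rewrite /Defs.dist s_k; field; have := K_ge1; lra.
Qed.

Lemma near_dle (s s' : {set 'I_n}) : #|s| = k -> #|s'| = k ->
  (k - #|s :&: s'| <= j)%nat -> dle s s' al.
Proof.
move=> s_k _ /leP/le_INR; rewrite -(dist_eq s' s_k) => near.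
rewrite /dle; case: Rle_dec => // -[].
have := jsize_spec n; have := radius_bounds; have := K_ge1; nra.
Qed.

Lemma dle_near : al < 1 - Om -> forall s s' : {set 'I_n}, #|s| = k -> #|s'| = k ->
  dle s s' al -> (k - #|s :&: s'| <= j)%nat.
Proof.
move=> lt_al s s' s_k _; rewrite /dle; case: Rle_dec => // close _.
have r_al : radius = al by rewrite /radius Rmin_left; lra.
apply: floor_max; first by have := pos_INR k; have := radius_bounds; nra.
by rewrite -(dist_eq s' s_k) r_al; have := K_ge1; nra.
Qed.

Lemma ln_binomial_near (a m : nat) : (m <= a)%nat -> (a <= n)%nat ->
  INR a * Hb (INR m / INR a) - ln (N + 2) <= ln (INR 'C(a, m)) <= INR a * Hb (INR m / INR a).
Proof.
move=> le_ma /leP/le_INR le_an; have := ln_binomial_bounds le_ma.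
have : ln (INR a + 1) <= ln (N + 2) by apply: ln_le; have := pos_INR a; lra.
lra.
Qed.

Lemma rate_seq_mul : N * rate_seq n = N * Hb (K / N) - K * Hb (J / K) - (N - K) * Hb (J / (N - K)).
Proof. by rewrite /rate_seq; field; have := K_le; have := K_ge1; nra. Qed.

Lemma N_gt0 : 0 < N.
Proof. by have := K_le; have := K_ge1; nra. Qed.

Local Notation C := (INR 'C(n, k)).
Local Notation C1 := (INR 'C(k, j)).
Local Notation C2 := (INR 'C(n - k, j)).

Lemma C_ge1 : 1 <= C.
Proof. by rewrite -INR_1; apply/le_INR/leP; rewrite bin_gt0 ksize_le. Qed.

Lemma C1_gt0 : 0 < C1.
Proof. by apply/lt_0_INR/ltP; rewrite bin_gt0 jsize_le. Qed.

Lemma C2_gt0 : 0 < C2.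
Proof. by apply/lt_0_INR/ltP; rewrite bin_gt0 jsize_le_compl. Qed.

Lemma sphere_gt0 : 0 < C1 * C2.
Proof. exact: Rmult_lt_0_compat C1_gt0 C2_gt0. Qed.

Lemma ln_binomial_le_N : ln C <= N.
Proof.
have [_ lnC_le] := ln_binomial_near ksize_le (leqnn n).
have : Hb (K / N) <= 1.
  apply: Hb_le1; split; last by apply: Rdiv_le_of_le_mul; have := N_gt0; have := K_le; nra.
  by apply: Rmult_le_pos; [apply: pos_INR | apply/Rlt_le/Rinv_0_lt_compat/N_gt0].
by have := N_gt0; nra.
Qed.

Lemma Ncov_ge1 : 1 <= INR (Ncov Om al n).
Proof. by rewrite -INR_1; apply/le_INR/leP/Ncov_gt0/ksize_le. Qed.

Lemma Ncov_le_ratio : INR (Ncov Om al n) <= C / (C1 * C2) * (N + 2).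
Proof.
have b_le : C1 * C2 <= C.
  by rewrite -mult_INR; apply/le_INR/leP/(sphere_le_binomial jsize_le ksize_le).
have := greedy_log_bound (M := INR (Ncov Om al n)) (conj sphere_gt0 b_le) C_ge1.
rewrite -mult_INR => /(_ (Ncov_le_greedy jsize_le near_dle)); rewrite mult_INR => le_Ncov.
apply: Rle_trans le_Ncov _; apply: Rmult_le_compat_l; last by have := ln_binomial_le_N; lra.
by apply/Rlt_le/Rdiv_lt_0_compat; [have := C_ge1; lra | exact: sphere_gt0].
Qed.

Lemma binomial_le_Ncov_sphere : al < 1 - Om -> C <= INR (Ncov Om al n) * ((J + 1) * (C1 * C2)).
Proof.
move=> lt_al; rewrite -S_INR -!mult_INR; apply/le_INR/leP.
apply: leq_trans (binomial_le_Ncov_ball jsize_le (dle_near lt_al)) _.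
by rewrite leq_mul2l ball_le_sphere ?orbT // => i; apply: sphere_growth.
Qed.

Lemma Ncov_upper : ln (INR (Ncov Om al n)) / N <= rate_seq n + 3 * (ln (N + 2) / N).
Proof.
have [_ lnC_le] := ln_binomial_near ksize_le (leqnn n).
have [lnC1_ge _] := ln_binomial_near jsize_le ksize_le.
have [lnC2_ge _] := ln_binomial_near jsize_le_compl (leq_subr k n).
rewrite INR_compl in lnC2_ge.
have : ln (INR (Ncov Om al n)) <= ln C - ln C1 - ln C2 + ln (N + 2).
  have Ncov_gt0 : 0 < INR (Ncov Om al n) by have := Ncov_ge1; lra.
  apply: Rle_trans (ln_le Ncov_gt0 Ncov_le_ratio) _.
  have := C_ge1; have := N_gt0 => ? ?.
  have Cb_gt0 : 0 < C / (C1 * C2) by apply: Rdiv_lt_0_compat; [lra | exact: sphere_gt0].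
  rewrite ln_mult //; last lra.
  rewrite /Rdiv ln_mult; [| lra | exact/Rinv_0_lt_compat/sphere_gt0].
  by rewrite ln_Rinv ?ln_mult; [lra | exact: C1_gt0 | exact: C2_gt0 | exact: sphere_gt0].
move=> ln_Ncov; apply: Rdiv_le_of_le_mul; first exact: N_gt0.
rewrite Rmult_plus_distr_l rate_seq_mul (_ : N * (3 * (ln (N + 2) / N)) = 3 * ln (N + 2)).
  by lra.
by field; have := N_gt0; lra.
Qed.

Lemma Ncov_lower : al < 1 - Om ->
  rate_seq n - 3 * (ln (N + 2) / N) <= ln (INR (Ncov Om al n)) / N.
Proof.
move=> lt_al; have [lnC_ge _] := ln_binomial_near ksize_le (leqnn n).
have [_ lnC1_le] := ln_binomial_near jsize_le ksize_le.
have [_ lnC2_le] := ln_binomial_near jsize_le_compl (leq_subr k n).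
rewrite INR_compl in lnC2_le.
have J1_gt0 : 0 < J + 1 by have := pos_INR j; lra.
have : ln C <= ln (INR (Ncov Om al n)) + ln (J + 1) + ln C1 + ln C2.
  apply: Rle_trans (ln_le _ (binomial_le_Ncov_sphere lt_al)) _; first by have := C_ge1; lra.
  have := Ncov_ge1; have := C1_gt0; have := C2_gt0 => ? ? ?.
  rewrite !ln_mult //; try lra; repeat apply: Rmult_lt_0_compat => //; lra.
have : ln (J + 1) <= ln (N + 2).
  by apply: ln_le => //; have := J_le; have := compl_ge; have := K_ge1; lra.
have : 0 <= ln (N + 2) by apply: ln_ge0; have := N_gt0; lra.
move=> lnN_ge0 lnJ ln_C; apply: Rle_div_of_mul_le; first exact: N_gt0.
rewrite Rmult_minus_distr_l rate_seq_mul (_ : N * (3 * (ln (N + 2) / N)) = 3 * ln (N + 2)).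
  by lra.
by field; have := N_gt0; lra.
Qed.

Lemma Ncov_ln_ge0 : 0 <= ln (INR (Ncov Om al n)) / N.
Proof.
apply: Rmult_le_pos; first exact/ln_ge0/Ncov_ge1.
exact/Rlt_le/Rinv_0_lt_compat/N_gt0.
Qed.
End LargeN.

Definition rate_fun (u v : R) : R := Hb u - u * Hb v - (1 - u) * Hb (u * v / (1 - u)).

Lemma Om_mul_ge2 n : (Z.to_nat (up (2 / Om)) <= n)%nat -> 2 <= Om * INR n.
Proof.
move/nat_up_gt => /(_ (Rlt_le _ _ (Rdiv_lt_0_compat 2 Om Rlt_0_2 (proj1 Om_bounds)))) lt_n.
have := Rmult_lt_compat_r Om _ _ (proj1 Om_bounds) lt_n.
by rewrite (_ : 2 / Om * Om = 2); [lra | field; lra].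
Qed.

Lemma rate_seq_eq n : (Z.to_nat (up (2 / Om)) <= n)%nat ->
  rate_seq n = rate_fun (INR (ksize Om n) / INR n) (INR (jsize n) / INR (ksize Om n)).
Proof.
move/Om_mul_ge2 => n_large; have := K_ge1 n_large; have := compl_ge n_large.
have := K_le n => K1 cK KN; have N_gt0 : 0 < INR n by nra.
rewrite /rate_seq /rate_fun (_ : (INR n - INR (ksize Om n)) / INR n = 1 - INR (ksize Om n) / INR n).
  by congr (_ - _ - _ * Hb _); field; nra.
by field; lra.
Qed.

Lemma Un_cv_ksize_ratio : Un_cv (fun n => INR (ksize Om n) / INR n) Om.
Proof.
apply: (Un_cv_of_le_div (c := 1) (N0 := 1)); first lra.
move=> n /leP/le_INR; rewrite INR_1 => n_ge1; have := ksize_spec n => k_bounds.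
rewrite (_ : INR (ksize Om n) / INR n - Om = (INR (ksize Om n) - Om * INR n) / INR n).
  by apply: Rabs_div_le; lra.
by field; lra.
Qed.

Lemma Un_cv_jsize_ratio : Un_cv (fun n => INR (jsize n) / INR (ksize Om n)) radius.
Proof.
apply: (Un_cv_of_le_div (c := 2 / Om) (N0 := Z.to_nat (up (2 / Om)))).
  by apply/Rlt_le/Rdiv_lt_0_compat; lra.
move=> n /Om_mul_ge2 n_large; have := K_ge1 n_large; have := K_le n.
have := jsize_spec n => j_bounds K_le K_ge1; have N_gt0 : 0 < INR n by nra.
rewrite (_ : INR (jsize n) / INR (ksize Om n) - radius
  = (INR (jsize n) - radius * INR (ksize Om n)) / INR (ksize Om n)); last by field; lra.
apply: Rle_trans (_ : 1 / INR (ksize Om n) <= _); first by apply: Rabs_div_le; lra.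
apply: Rdiv_le_of_le_mul; first lra.
rewrite (_ : INR (ksize Om n) * (2 / Om / INR n) = 2 * INR (ksize Om n) / (Om * INR n)).
  by apply: Rle_div_of_mul_le; have := ksize_spec n; nra.
by field; lra.
Qed.

Lemma Un_cv_rate_seq : Un_cv rate_seq (rate_fun Om radius).
Proof.
have cv_u := Un_cv_ksize_ratio; have cv_v := Un_cv_jsize_ratio.
set u := fun n => _ in cv_u; set v := fun n => _ in cv_v.
have [cv_Hb_v cv_Hb_w] : Un_cv (fun n => Hb (v n)) (Hb radius) /\
    Un_cv (fun n => Hb (u n * v n / (1 - u n))) (Hb (Om * radius / (1 - Om))).
  have [r0|r_neq0] := Req_dec radius 0.
    have v0 n : v n = 0.
      have := jsize_spec n; rewrite r0 Rmult_0_l => j_bounds.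
      by rewrite /v (_ : INR (jsize n) = 0) ?Rdiv_0_l //; have := pos_INR (jsize n); lra.
    rewrite r0 Rmult_0_r Rdiv_0_l.
    by split; apply: (Un_cv_eventually_ext (N0 := 0)) (Un_cv_const _) => n _;
      rewrite v0 ?Rmult_0_r ?Rdiv_0_l.
  have [[r_ge0 r_le] _] := radius_bounds.
  have cont_inv : continuity_pt (fun x => / (1 - x)) Om.
    apply: continuity_pt_inv; last lra.
    apply: continuity_pt_minus; first exact: continuity_pt_const.
    exact/derivable_continuous_pt/derivable_pt_id.
  split; apply: continuity_seq; try (apply: Hb_continuity_pt; split); try lra.
  - exact: cv_v.
  - by apply: Rdiv_lt_0_compat; [apply: Rmult_lt_0_compat|]; lra.
  - by apply: (Rle_lt_trans _ Om); [apply: Rdiv_le_of_le_mul; nra | lra].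
  - exact: CV_mult _ _ _ _ (CV_mult _ _ _ _ cv_u cv_v) (continuity_seq _ _ _ cont_inv cv_u).
have cv_1u : Un_cv (fun n => 1 - u n) (1 - Om) by apply: CV_minus (Un_cv_const 1) cv_u.
have cv_Hb_u : Un_cv (fun n => Hb (u n)) (Hb Om) by apply/continuity_seq/cv_u/Hb_continuity_pt; lra.
apply: (Un_cv_eventually_ext (N0 := Z.to_nat (up (2 / Om)))) => [n /rate_seq_eq -> //|].
exact: CV_minus _ _ _ _ (CV_minus _ _ _ _ cv_Hb_u (CV_mult _ _ _ _ cv_u cv_Hb_v))
  (CV_mult _ _ _ _ cv_1u cv_Hb_w).
Qed.

Lemma rate_fun_compl (u : R) : u < 1 -> rate_fun u (1 - u) = 0.
Proof.
move=> lt_u1; rewrite /rate_fun (_ : u * (1 - u) / (1 - u) = u) ?Hb_sym; first ring.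
by field; lra.
Qed.

Lemma Rate_radius : Rate Om al = rate_fun Om radius.
Proof.
rewrite /Rate /radius; case: Rlt_dec => [lt_al|ge_al]; first by rewrite Rmin_left //; lra.
by rewrite Rmin_right ?rate_fun_compl //; lra.
Qed.
End Asymptotics.

Theorem lemma1 (Om al : R) :
  (0 < Om <= 1 / 2)%R -> (0 <= al <= 1)%R ->
  Un_cv (fun n : nat => (ln (INR (Ncov Om al n)) / INR n)%R) (Rate Om al).
Proof.
move=> Om_bounds al_bounds.
have cv_err : Un_cv (fun n => 3 * (ln (INR n + 2) / INR n)) 0.
  by have := CV_mult _ _ _ _ (Un_cv_const 3) Un_cv_ln_div; rewrite Rmult_0_r.
have cv_upper : Un_cv (fun n => rate_seq Om al n + 3 * (ln (INR n + 2) / INR n)) (Rate Om al).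
  rewrite -(Rplus_0_r (Rate _ _)) Rate_radius //.
  exact: CV_plus _ _ _ _ (Un_cv_rate_seq Om_bounds al_bounds) cv_err.
have [lt_al|ge_al] := Rlt_dec al (1 - Om).
  have cv_lower : Un_cv (fun n => rate_seq Om al n - 3 * (ln (INR n + 2) / INR n)) (Rate Om al).
    rewrite -(Rminus_0_r (Rate _ _)) Rate_radius //.
    exact: CV_minus _ _ _ _ (Un_cv_rate_seq Om_bounds al_bounds) cv_err.
  apply: (Un_cv_squeeze (N0 := Z.to_nat (up (2 / Om))) _ cv_lower cv_upper).
  move=> n /(Om_mul_ge2 Om_bounds) n_large.
  by split; [exact: Ncov_lower | exact: Ncov_upper].
have Rate0 : Rate Om al = 0 by rewrite /Rate; case: Rlt_dec.
rewrite Rate0 in cv_upper *.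
apply: (Un_cv_squeeze (N0 := Z.to_nat (up (2 / Om))) _ (Un_cv_const 0) cv_upper).
by move=> n /(Om_mul_ge2 Om_bounds) n_large; split; [exact: Ncov_ln_ge0 | exact: Ncov_upper].
Qed.
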